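(* For every positive integer $r$ there exists a partition $\mathbb N=A_1\cup A_2\cup\cdots\cup A_r$ into pairwise disjoint sets such that for every $1\le i\le r$ and every $n\ge0$, the set $A_i-n$ is a central set.
   Context: $\mathbb N=\{0,1,2,\dots\}$; for $A\subseteq\mathbb N$ and $n\in\mathbb N$, $A-n=\{m\in\mathbb N: m+n\in A\}$. $\beta\mathbb N$ is the set of ultrafilters on $\mathbb N$ with addition $A\in p+q$ iff $\{n:A-n\in p\}\in q$; a minimal idempotent is a non-principal ultrafilter $p$ with $p+p=p$ lying in the smallest two-sided ideal of $\beta\mathbb N$; a set is central if it belongs to some minimal idempotent. *)

From Stdlib Require Import Arith.

Definition shift (A : nat -> Prop) (n : nat) : nat -> Prop :=
  fun m => A (m + n).

(* Points of beta N: ultrafilters on nat, as families of subsets. *)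
Definition is_ultrafilter (p : (nat -> Prop) -> Prop) : Prop :=
  p (fun _ => True) /\
  ~ p (fun _ => False) /\
  (forall A B : nat -> Prop, p A -> (forall m, A m -> B m) -> p B) /\
  (forall A B : nat -> Prop, p A -> p B -> p (fun m => A m /\ B m)) /\
  (forall A : nat -> Prop, p A \/ p (fun m => ~ A m)).

Definition nonprincipal (p : (nat -> Prop) -> Prop) : Prop :=
  forall n : nat, ~ p (fun m => m = n).

Definition ufadd (p q : (nat -> Prop) -> Prop) : (nat -> Prop) -> Prop :=
  fun A => q (fun n => p (shift A n)).

Definition two_sided_ideal (I : ((nat -> Prop) -> Prop) -> Prop) : Prop :=
  (forall p, I p -> is_ultrafilter p) /\
  (exists p, I p) /\
  (forall p q, is_ultrafilter p -> I q -> I (ufadd p q) /\ I (ufadd q p)).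

Definition in_smallest_ideal (p : (nat -> Prop) -> Prop) : Prop :=
  exists K : ((nat -> Prop) -> Prop) -> Prop,
    two_sided_ideal K /\
    (forall I, two_sided_ideal I -> forall q, K q -> I q) /\
    K p.

Definition minimal_idempotent (p : (nat -> Prop) -> Prop) : Prop :=
  is_ultrafilter p /\ nonprincipal p /\ ufadd p p = p /\ in_smallest_ideal p.

Definition central (A : nat -> Prop) : Prop :=
  exists p, minimal_idempotent p /\ p A.

(* Cells: A_i = { m : log2 m = i mod r }.  Each translate A_i - n contains
   arbitrarily long intervals arbitrarily far out (it is thick), so the
   theorem reduces to "every thick set is central". *)

From Stdlib Require Import Arith Lia Classical FunctionalExtensionality PropExtensionality.
From mathcomp Require classical_sets filter.
Set Bullet Behavior "Strict Subproofs".

Module MSets := mathcomp.classical.classical_sets.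
Module MFilter := mathcomp.classical.filter.

Local Notation family := ((nat -> Prop) -> Prop).
Local Notation "A ⊆ B" := (forall t, A t -> B t) (at level 70, no associativity).

Lemma set_ext {T : Type} (A B : T -> Prop) : A ⊆ B -> B ⊆ A -> A = B.
Proof.
  intros hAB hBA. apply functional_extensionality; intro t.
  apply propositional_extensionality; split; auto.
Qed.

Section UltrafilterFacts.
Variable u : family.
Hypothesis hu : is_ultrafilter u.

Lemma uf_full : u (fun _ => True).
Proof. exact (proj1 hu). Qed.

Lemma uf_mono A B : u A -> A ⊆ B -> u B.
Proof. pose proof hu as [_ [_ [h _]]]. eauto. Qed.

Lemma uf_inter A B : u A -> u B -> u (fun m => A m /\ B m).
Proof. pose proof hu as [_ [_ [_ [h _]]]]. eauto. Qed.

Lemma uf_inhabited A : u A -> exists m, A m.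
Proof.
  intro hA. apply NNPP; intro hn. apply (proj1 (proj2 hu)).
  apply (uf_mono A); [exact hA|]. intros m hm. apply hn; eauto.
Qed.

Lemma uf_compl A : ~ u A -> u (fun m => ~ A m).
Proof. pose proof hu as [_ [_ [_ [_ h]]]]. destruct (h A); tauto. Qed.

Lemma uf_not_both A : u A -> u (fun m => ~ A m) -> False.
Proof.
  intros h1 h2. destruct (uf_inhabited _ (uf_inter _ _ h1 h2)) as [m [a b]]. auto.
Qed.

End UltrafilterFacts.

Lemma uf_eq_of_incl u v : is_ultrafilter u -> is_ultrafilter v -> u ⊆ v -> u = v.
Proof.
  intros hu hv huv. apply set_ext; [exact huv|].
  intros A hA. apply NNPP; intro hn.
  exact (uf_not_both v hv A hA (huv _ (uf_compl u hu A hn))).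
Qed.

Lemma ultrafilter_extension {I : Type} (D : I -> Prop) (B : I -> nat -> Prop) :
  (exists i, D i) ->
  (forall i j, D i -> D j -> exists k, D k /\ B k ⊆ (fun m => B i m /\ B j m)) ->
  (forall i, D i -> exists m, B i m) ->
  exists u, is_ultrafilter u /\ forall i, D i -> u (B i).
Proof.
  intros hne hdir hinh.
  assert (hF : MFilter.Filter (MFilter.filter_from D B)).
  { apply MFilter.filter_from_filter; [exact hne|].
    intros i j hi hj. destruct (hdir i j hi hj) as [k [hk hsub]].
    exists k; [exact hk | exact hsub]. }
  destruct (MFilter.ultraFilterLemma (MFilter.filter_from_proper hF hinh))
    as [u [hu hsub]].
  exists u. split.
  - pose proof (@MFilter.ultra_proper _ u hu) as hup.
    pose proof (@MFilter.filter_filter _ u hup) as huf.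
    split; [|split; [|split; [|split]]].
    + exact (@MFilter.filterT _ u huf).
    + exact (@MFilter.filter_not_empty _ u hup).
    + intros A A' hA hAA'. exact (@MFilter.filterS _ u huf A A' hAA' hA).
    + intros A A' hA hA'. exact (@MFilter.filterI _ u huf A A' hA hA').
    + intro A. exact (@MFilter.in_ultra_setVsetC _ u A hu).
  - intros i hi. apply hsub. exists i; [exact hi | intros m hm; exact hm].
Qed.

Lemma shift_shift A n m : shift (shift A n) m = shift A (m + n).
Proof.
  apply functional_extensionality; intro k. unfold shift. now rewrite Nat.add_assoc.
Qed.

Definition shifts_in (x : family) (A : nat -> Prop) : nat -> Prop :=
  fun n => x (shift A n).

Lemma shifts_in_mono x A B :
  is_ultrafilter x -> A ⊆ B -> shifts_in x A ⊆ shifts_in x B.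
Proof. intros hx hAB n hn. apply (uf_mono x hx _ _ hn). intro k; apply hAB. Qed.

Lemma ufadd_ultrafilter u v :
  is_ultrafilter u -> is_ultrafilter v -> is_ultrafilter (ufadd u v).
Proof.
  intros hu hv. unfold ufadd. split; [|split; [|split; [|split]]].
  - apply (uf_mono v hv _ _ (uf_full v hv)). intros n _.
    apply (uf_mono u hu _ _ (uf_full u hu)). intros; exact I.
  - intro h. destruct (uf_inhabited v hv _ h) as [n hn].
    destruct (uf_inhabited u hu _ hn) as [k hk]. exact hk.
  - intros A B hA hAB. exact (uf_mono v hv _ _ hA (shifts_in_mono u A B hu hAB)).
  - intros A B hA hB. apply (uf_mono v hv _ _ (uf_inter v hv _ _ hA hB)).
    intros n [h1 h2]. exact (uf_inter u hu _ _ h1 h2).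
  - intro A. destruct (classic (v (shifts_in u A))) as [h|h]; [left; exact h|right].
    apply (uf_mono v hv _ _ (uf_compl v hv _ h)). intros n hn.
    exact (uf_compl u hu (shift A n) hn).
Qed.

Lemma ufadd_assoc u v w : ufadd (ufadd u v) w = ufadd u (ufadd v w).
Proof.
  apply functional_extensionality; intro A. unfold ufadd.
  f_equal. apply functional_extensionality; intro n. f_equal.
  apply functional_extensionality; intro m. now rewrite shift_shift.
Qed.

(* C is a closed set of ultrafilters: it contains every ultrafilter u each of
   whose basic neighbourhoods { w : w A }, A in u, meets C. *)
Definition closed_set (C : family -> Prop) : Prop :=
  C ⊆ is_ultrafilter /\
  forall u, is_ultrafilter u -> (forall A, u A -> exists w, C w /\ w A) -> C u.

Definition bigcap {T : Type} (Phi : (T -> Prop) -> Prop) : T -> Prop :=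
  fun t => forall C, Phi C -> C t.

Definition directed {T : Type} (Phi : (T -> Prop) -> Prop) : Prop :=
  forall C1 C2, Phi C1 -> Phi C2 -> exists C3, Phi C3 /\ C3 ⊆ C1 /\ C3 ⊆ C2.

Definition chain {T : Type} (Phi : (T -> Prop) -> Prop) : Prop :=
  forall C1 C2, Phi C1 -> Phi C2 -> C1 ⊆ C2 \/ C2 ⊆ C1.

Lemma chain_directed {T : Type} (Phi : (T -> Prop) -> Prop) : chain Phi -> directed Phi.
Proof.
  intros hch C1 C2 h1 h2. destruct (hch C1 C2 h1 h2) as [s|s].
  - exists C1. auto.
  - exists C2. auto.
Qed.

Lemma closed_all : closed_set is_ultrafilter.
Proof. split; auto. Qed.

Lemma closed_bigcap Phi :
  (exists C, Phi C) -> (forall C, Phi C -> closed_set C) -> closed_set (bigcap Phi).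
Proof.
  intros [C0 h0] hcl. split.
  - intros w hw. exact (proj1 (hcl C0 h0) w (hw C0 h0)).
  - intros u hu hclose C hC. apply (proj2 (hcl C hC) u hu).
    intros A hA. destruct (hclose A hA) as [w [hw hwA]]. exists w. split; [apply hw, hC | exact hwA].
Qed.

Lemma closed_meet_basic C B : closed_set C -> closed_set (fun w => C w /\ w B).
Proof.
  intros [hCuf hCcl]. split.
  - intros w [hw _]; auto.
  - intros u hu hclose. split.
    + apply hCcl; [exact hu|]. intros A hA. destruct (hclose A hA) as [w [[hw _] hwA]]; eauto.
    + apply NNPP; intro hn. destruct (hclose _ (uf_compl u hu B hn)) as [w [[hw hwB] hwn]].
      exact (uf_not_both w (hCuf w hw) B hwB hwn).
Qed.

Lemma closed_directed_meet (Phi : (family -> Prop) -> Prop) :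
  (exists C, Phi C) -> directed Phi ->
  (forall C, Phi C -> closed_set C /\ exists w, C w) ->
  exists u, bigcap Phi u.
Proof.
  intros hne hdir hPhi.
  set (F := fun A => exists C, Phi C /\ forall w, C w -> w A).
  destruct (ultrafilter_extension F (fun A => A)) as [u [hu hF]].
  - destruct hne as [C hC]. exists (fun _ => True), C. split; [exact hC|].
    intros w hw. exact (uf_full w (proj1 (proj1 (hPhi C hC)) w hw)).
  - intros A1 A2 [C1 [h1 s1]] [C2 [h2 s2]].
    destruct (hdir C1 C2 h1 h2) as [C3 [h3 [s31 s32]]].
    exists (fun m => A1 m /\ A2 m). split; [|auto].
    exists C3. split; [exact h3|]. intros w hw.
    exact (uf_inter w (proj1 (proj1 (hPhi C3 h3)) w hw) _ _ (s1 w (s31 w hw)) (s2 w (s32 w hw))).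
  - intros A [C [hC s]]. destruct (hPhi C hC) as [[hCuf _] [w hw]].
    exact (uf_inhabited w (hCuf w hw) A (s w hw)).
  - exists u. intros C hC. destruct (hPhi C hC) as [[hCuf hCcl] _].
    apply hCcl; [exact hu|]. intros A hA. apply NNPP; intro hn.
    apply (uf_not_both u hu A hA). apply hF. exists C. split; [exact hC|].
    intros w hw. apply (uf_compl w (hCuf w hw)). intro hwA. apply hn; eauto.
Qed.

(* v |-> ufadd x v is continuous, so by compactness x + C is closed. *)
Lemma closed_translate x C :
  is_ultrafilter x -> closed_set C ->
  closed_set (fun t => exists v, C v /\ t = ufadd x v).
Proof.
  intros hx hC. pose proof hC as [hCuf _]. split.
  - intros t [v [hv ->]]. exact (ufadd_ultrafilter x v hx (hCuf v hv)).
  - intros t ht hclose.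
    set (Phi := fun C' => exists A, t A /\ C' = (fun w => C w /\ w (shifts_in x A))).
    destruct (closed_directed_meet Phi) as [v hv].
    + exists (fun w => C w /\ w (shifts_in x (fun _ => True))).
      exists (fun _ => True). split; [exact (uf_full t ht) | reflexivity].
    + intros C1 C2 [A1 [h1 ->]] [A2 [h2 ->]].
      exists (fun w => C w /\ w (shifts_in x (fun m => A1 m /\ A2 m))). split.
      * exists (fun m => A1 m /\ A2 m). split; [exact (uf_inter t ht _ _ h1 h2) | reflexivity].
      * split; intros w [hw hwA]; split; auto;
          apply (uf_mono w (hCuf w hw) _ _ hwA), shifts_in_mono; auto; tauto.
    + intros C' [A [hA ->]]. split; [exact (closed_meet_basic C _ hC)|].
      destruct (hclose A hA) as [w [[v [hv ->]] hvA]]. exists v. split; auto.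
    + assert (hvC : C v).
      { destruct (hv (fun w => C w /\ w (shifts_in x (fun _ => True)))) as [h _]; [|exact h].
        exists (fun _ => True). split; [exact (uf_full t ht) | reflexivity]. }
      exists v. split; [exact hvC|].
      apply uf_eq_of_incl; [exact ht | exact (ufadd_ultrafilter x v hx (hCuf v hvC))|].
      intros A hA. apply (hv (fun w => C w /\ w (shifts_in x A))). exists A. auto.
Qed.

Lemma closed_fixers x C :
  is_ultrafilter x -> closed_set C -> closed_set (fun y => C y /\ ufadd x y = x).
Proof.
  intros hx [hCuf hCcl]. split.
  - intros y [hy _]; auto.
  - intros u hu hclose. split.
    + apply hCcl; [exact hu|]. intros A hA. destruct (hclose A hA) as [w [[hw _] hwA]]; eauto.
    + apply eq_sym, uf_eq_of_incl; [exact hx | exact (ufadd_ultrafilter x u hx hu)|].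
      intros A hA. change (u (shifts_in x A)). apply NNPP; intro hn.
      destruct (hclose _ (uf_compl u hu _ hn)) as [w [[hw hfix] hwn]].
      apply (uf_not_both w (hCuf w hw) (shifts_in x A)); [|exact hwn].
      change (ufadd x w A). rewrite hfix. exact hA.
Qed.

(* The maximal
   sets X with P (C0 minus X) given by the library's Zorn_bigcup yield it. *)
Lemma zorn_minimal {T : Type} (P : (T -> Prop) -> Prop) (C0 : T -> Prop) :
  P C0 ->
  (forall Phi, (exists C, Phi C) -> chain Phi -> (forall C, Phi C -> P C) -> P (bigcap Phi)) ->
  exists C, P C /\ C ⊆ C0 /\ forall C', P C' -> C' ⊆ C -> C ⊆ C'.
Proof.
  intros hC0 hchain.
  set (Q := fun X : T -> Prop => P (fun t => C0 t /\ ~ X t)).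
  destruct (MSets.Zorn_bigcup (P:=Q)) as [X [hX hmax]].
  - intros F hFQ hFtot. unfold Q.
    destruct (classic (exists X, F X)) as [[X0 hX0] | hempty].
    + set (Phi := fun C => exists X, F X /\ C = (fun t => C0 t /\ ~ X t)).
      replace (fun t => C0 t /\ ~ MSets.bigcup F (fun X => X) t) with (bigcap Phi).
      * apply hchain.
        -- exists (fun t => C0 t /\ ~ X0 t), X0. auto.
        -- intros C1 C2 [X1 [h1 ->]] [X2 [h2 ->]].
           destruct (hFtot X1 X2 h1 h2) as [s|s]; [right|left]; intros t [a b]; split; auto.
        -- intros C [X [hX ->]]. exact (hFQ X hX).
      * apply set_ext.
        -- intros t ht. split.
           ++ exact (proj1 (ht _ (ex_intro _ X0 (conj hX0 eq_refl)))).
           ++ intros [X hX hXt]. exact (proj2 (ht _ (ex_intro _ X (conj hX eq_refl))) hXt).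
        -- intros t [h0 hn] C [X [hX ->]]. split; [exact h0|].
           intro hXt. apply hn. exists X; auto.
    + replace (fun t => C0 t /\ ~ MSets.bigcup F (fun X => X) t) with C0; [exact hC0|].
      apply set_ext; [|intros t [h _]; exact h].
      intros t h. split; [exact h|]. intros [X hX _]. apply hempty; eauto.
  - exists (fun t => C0 t /\ ~ X t). split; [exact hX|]. split; [intros t [h _]; exact h|].
    intros C' hC' hsub t [h0 hnX].
    set (Y := fun s => X s \/ ~ C' s).
    assert (hY : Q Y).
    { unfold Q. replace (fun s => C0 s /\ ~ Y s) with C'; [exact hC'|].
      apply set_ext.
      - intros s hs. destruct (hsub s hs) as [a b]. split; [exact a|]. intros [c|c]; auto.
      - intros s [a b]. apply NNPP. intro hn. apply b. right. exact hn. }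
    assert (hYX : Y ⊆ X).
    { apply NNPP. intro hn. apply (hmax Y); [|exact hY].
      split; [intros s hs; left; exact hs | exact hn]. }
    apply NNPP. intro hn. apply hnX, hYX. right. exact hn.
Qed.

Definition closed_with (Op : (family -> Prop) -> Prop) (C : family -> Prop) : Prop :=
  (exists w, C w) /\ closed_set C /\ Op C.

Lemma minimal_closed_with (Op : (family -> Prop) -> Prop) (C0 : family -> Prop) :
  (forall Phi, (forall C, Phi C -> Op C) -> Op (bigcap Phi)) ->
  closed_with Op C0 ->
  exists C, closed_with Op C /\ C ⊆ C0 /\
    forall C', closed_with Op C' -> C' ⊆ C -> C ⊆ C'.
Proof.
  intros hOp hC0. apply zorn_minimal; [exact hC0|].
  intros Phi hne hch hPhi. split; [|split].
  - apply closed_directed_meet; [exact hne | exact (chain_directed Phi hch)|].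
    intros C hC. destruct (hPhi C hC) as [hw [hcl _]]. auto.
  - apply closed_bigcap; [exact hne|]. intros C hC. exact (proj1 (proj2 (hPhi C hC))).
  - apply hOp. intros C hC. exact (proj2 (proj2 (hPhi C hC))).
Qed.

Definition right_ideal (C : family -> Prop) : Prop :=
  forall u v, C u -> is_ultrafilter v -> C (ufadd u v).

Definition subsemigroup (C : family -> Prop) : Prop :=
  forall u v, C u -> C v -> C (ufadd u v).

Lemma right_ideal_bigcap Phi :
  (forall C, Phi C -> right_ideal C) -> right_ideal (bigcap Phi).
Proof. intros h u v hu hv C hC. exact (h C hC u v (hu C hC) hv). Qed.

Lemma subsemigroup_bigcap Phi :
  (forall C, Phi C -> subsemigroup C) -> subsemigroup (bigcap Phi).
Proof. intros h u v hu hv C hC. exact (h C hC u v (hu C hC) (hv C hC)). Qed.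

Section MinimalSubsemigroup.
Variable M : family -> Prop.
Hypothesis hM : closed_with subsemigroup M.
Hypothesis hMmin : forall M', closed_with subsemigroup M' -> M' ⊆ M -> M ⊆ M'.

(* Ellis-Numakura: x + M and then the fixers of x in M are closed
   subsemigroups inside M, hence equal to M; so x fixes itself. *)
Lemma minimal_subsemigroup_idempotent x : M x -> ufadd x x = x.
Proof.
  intro hxM. pose proof hM as [_ [hMcl hMsg]]. pose proof hMcl as [hMuf _].
  assert (hx : is_ultrafilter x) by auto.
  assert (htrans : exists v0, M v0 /\ x = ufadd x v0).
  { apply (hMmin (fun t => exists v, M v /\ t = ufadd x v)); [split; [|split] | | exact hxM].
    - exists (ufadd x x), x. auto.
    - exact (closed_translate x M hx hMcl).
    - intros t1 t2 [v1 [h1 ->]] [v2 [h2 ->]].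
      exists (ufadd v1 (ufadd x v2)). split; [auto | apply ufadd_assoc].
    - intros t [v [hv ->]]. auto. }
  destruct htrans as [v0 [hv0 e0]].
  assert (hfix : M x /\ ufadd x x = x).
  { apply (hMmin (fun y => M y /\ ufadd x y = x)); [split; [|split] | | exact hxM].
    - exists v0. auto.
    - exact (closed_fixers x M hx hMcl).
    - intros u v [hu eu] [hv ev]. split; [auto|]. now rewrite <- ufadd_assoc, eu, ev.
    - intros y [hy _]. exact hy. }
  exact (proj2 hfix).
Qed.

End MinimalSubsemigroup.

Section MinimalRightIdeal.
Variable R : family -> Prop.
Hypothesis hR : closed_with right_ideal R.
Hypothesis hRmin : forall R', closed_with right_ideal R' -> R' ⊆ R -> R ⊆ R'.

(* y + beta N is a closed right ideal inside R, hence all of R. *)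
Lemma minimal_right_ideal_generated x y :
  R x -> R y -> exists v, is_ultrafilter v /\ x = ufadd y v.
Proof.
  intros hx hy. pose proof hR as [_ [[hRuf _] hRid]].
  apply (hRmin (fun t => exists v, is_ultrafilter v /\ t = ufadd y v)); [split; [|split] | | exact hx].
  - exists (ufadd y y), y. auto.
  - exact (closed_translate y is_ultrafilter (hRuf y hy) closed_all).
  - intros t v' [v [hv ->]] hv'. exists (ufadd v v'). split.
    + exact (ufadd_ultrafilter v v' hv hv').
    + apply ufadd_assoc.
  - intros t [v [hv ->]]. auto.
Qed.

(* For w in a two-sided ideal I, x = (x + w) + v lies in I. *)
Lemma minimal_right_ideal_in_ideals x I : R x -> two_sided_ideal I -> I x.
Proof.
  intros hx [hIuf [[w hw] hIabs]]. pose proof hR as [_ [[hRuf _] hRid]].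
  destruct (hIabs x w (hRuf x hx) hw) as [hxw _].
  destruct (minimal_right_ideal_generated x (ufadd x w) hx (hRid x w hx (hIuf w hw)))
    as [v [hv ->]].
  exact (proj2 (hIabs v (ufadd x w) hv hxw)).
Qed.

End MinimalRightIdeal.

Lemma in_smallest_ideal_of_common x :
  is_ultrafilter x -> (forall I, two_sided_ideal I -> I x) -> in_smallest_ideal x.
Proof.
  intros hx hall.
  exists (fun q => is_ultrafilter q /\ forall I, two_sided_ideal I -> I q).
  split; [|split].
  - split; [|split].
    + intros q [hq _]. exact hq.
    + exists x. auto.
    + intros p q hp [hq hqI]. split; split;
        try (apply ufadd_ultrafilter; assumption);
        intros I hI; destruct (proj2 (proj2 hI) p q hp (hqI I hI)); assumption.
  - intros I hI q [_ hq]. exact (hq I hI).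
  - auto.
Qed.

Lemma nonprincipal_of_tails p :
  is_ultrafilter p -> (forall k, p (fun m => k <= m)) -> nonprincipal p.
Proof.
  intros hp htail n hn.
  destruct (uf_inhabited p hp _ (uf_inter p hp _ _ hn (htail (S n)))) as [m [-> h]]. lia.
Qed.

Section FilterBase.
Variables (I : Type) (D : I -> Prop) (B : I -> nat -> Prop).
Hypothesis base_nonempty : exists i, D i.
Hypothesis base_directed :
  forall i j, D i -> D j -> exists k, D k /\ B k ⊆ (fun m => B i m /\ B j m).
Hypothesis base_inhabited : forall i, D i -> exists m, B i m.
Hypothesis base_shift : forall i n, D i -> exists j, D j /\ B j ⊆ shift (B i) n.
Hypothesis base_tails : forall k, exists i, D i /\ B i ⊆ (fun m => k <= m).

Definition ultrafilters_over : family -> Prop :=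
  fun u => is_ultrafilter u /\ forall i, D i -> u (B i).

Lemma ultrafilters_over_right_ideal : closed_with right_ideal ultrafilters_over.
Proof.
  split; [|split; [split|]].
  - exact (ultrafilter_extension D B base_nonempty base_directed base_inhabited).
  - intros u [hu _]. exact hu.
  - intros u hu hclose. split; [exact hu|]. intros i hi. apply NNPP; intro hn.
    destruct (hclose _ (uf_compl u hu _ hn)) as [w [[hw hwB] hwn]].
    exact (uf_not_both w hw _ (hwB i hi) hwn).
  - intros u v [hu huB] hv. split; [exact (ufadd_ultrafilter u v hu hv)|].
    intros i hi. apply (uf_mono v hv _ _ (uf_full v hv)). intros n _.
    destruct (base_shift i n hi) as [j [hj hsub]].
    exact (uf_mono u hu _ _ (huB j hj) hsub).
Qed.

(* Some minimal idempotent contains the whole base: take a minimal closed right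
   ideal R inside ultrafilters_over and a minimal closed subsemigroup of R. *)
Theorem minimal_idempotent_over :
  exists p, minimal_idempotent p /\ forall i, D i -> p (B i).
Proof.
  destruct (minimal_closed_with right_ideal ultrafilters_over right_ideal_bigcap
              ultrafilters_over_right_ideal) as [R [hR [hRsub hRmin]]].
  assert (hRsg : closed_with subsemigroup R).
  { destruct hR as [hne [hcl hid]]. split; [exact hne | split; [exact hcl|]].
    intros u v hu hv. exact (hid u v hu (proj1 hcl v hv)). }
  destruct (minimal_closed_with subsemigroup R subsemigroup_bigcap hRsg)
    as [M [hM [hMsub hMmin]]].
  destruct hM as [[x hxM] hMrest].
  assert (hxR : R x) by auto.
  destruct (hRsub x hxR) as [hx hxB].
  exists x. split; [split; [|split; [|split]] | exact hxB].
  - exact hx.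
  - apply nonprincipal_of_tails; [exact hx|]. intro k.
    destruct (base_tails k) as [i [hi hsub]]. exact (uf_mono x hx _ _ (hxB i hi) hsub).
  - exact (minimal_subsemigroup_idempotent M (conj (ex_intro _ x hxM) hMrest) hMmin x hxM).
  - apply in_smallest_ideal_of_common; [exact hx|].
    intros I0 hI0. exact (minimal_right_ideal_in_ideals R hR hRmin x I0 hxR hI0).
Qed.

End FilterBase.

Definition thick (S : nat -> Prop) : Prop :=
  forall N k, exists x, k <= x /\ forall j, j <= N -> S (x + j).

(* Thick sets are central: the far-out long intervals of S form a base as above. *)
Lemma thick_central S : thick S -> central S.
Proof.
  intro hS.
  set (W := fun (i : nat * nat) x => snd i <= x /\ forall j, j <= fst i -> S (x + j)).
  destruct (minimal_idempotent_over (nat * nat) (fun _ => True) W) as [p [hp hW]].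
  - exists (0, 0). exact I.
  - intros [N1 k1] [N2 k2] _ _. exists (max N1 N2, max k1 k2). split; [exact I|].
    intros x [hx hj]; unfold W in *; simpl in *. split; split; try lia; intros j hj'; apply hj; lia.
  - intros [N k] _. destruct (hS N k) as [x hx]. exists x. exact hx.
  - intros [N k] n _. exists (N + n, k). split; [exact I|].
    intros x [hx hj]; unfold W, shift in *; simpl in *. split; [lia|].
    intros j hj'. replace (x + n + j) with (x + (n + j)) by lia. apply hj. lia.
  - intro k. exists (0, k). split; [exact I|]. intros x [hx _]. exact hx.
  - exists p. split; [exact hp|]. apply (uf_mono p (proj1 hp) _ _ (hW (0, 0) I)).
    intros x [_ hj]. rewrite <- (Nat.add_0_r x). apply hj. simpl. lia.
Qed.

(* Each translate of a class { m : log2 m = i mod r } is thick: it contains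
   [2^e, 2^(e+1)) - n for every large e = i mod r. *)
Lemma log2_class_shift_thick r i n :
  i < r -> thick (shift (fun m => Nat.log2 m mod r = i) n).
Proof.
  intros hi N k.
  set (e := i + (k + n + N + 1) * r).
  assert (he : e < 2 ^ e) by (apply Nat.pow_gt_lin_r; lia).
  assert (he2 : k + n + N + 1 <= e) by (unfold e; nia).
  exists (2 ^ e - n). split; [lia|].
  intros j hj. unfold shift.
  replace (2 ^ e - n + j + n) with (2 ^ e + j) by lia.
  rewrite (Nat.log2_unique (2 ^ e + j) e).
  - unfold e. rewrite Nat.Div0.mod_add. apply Nat.mod_small; exact hi.
  - lia.
  - rewrite Nat.pow_succ_r'. lia.
Qed.

Theorem theorem7 (r : nat) (hr : 0 < r) :
  exists A : nat -> nat -> Prop,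
    (forall m : nat, exists i, i < r /\ A i m) /\
    (forall i j m : nat, i < r -> j < r -> A i m -> A j m -> i = j) /\
    (forall i : nat, i < r -> forall n : nat, central (shift (A i) n)).
Proof.
  exists (fun i m => Nat.log2 m mod r = i). split; [|split].
  - intro m. exists (Nat.log2 m mod r). split; [apply Nat.mod_upper_bound; lia | reflexivity].
  - intros i j m _ _ hi hj. congruence.
  - intros i hi n. apply thick_central, log2_class_shift_thick, hi.
Qed.
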